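(* Let $\varphi$ be an automorphism of $E$ with $\varphi^2=\mathrm{id}_E$ and let $\beta=\{e_1,e_2,\ldots\}$ be a basis of $L$. Let $I=\{n\mid\varphi(e_n)=\pm e_n\}$, $I^+=\{i\in I\mid\varphi(e_i)=e_i\}$, $I^-=\{i\in I\mid\varphi(e_i)=-e_i\}$, $J=\mathbb{N}\setminus I$. (1) If $I^+$ is infinite, $I^-$ is finite with $|I^-|=k$, and $J$ is infinite, then $T_2(E_\varphi)\subseteq T_2(E_{k^\ast})$. (2) If $I^+$ is finite with $|I^+|=k$, $I^-$ is infinite and $J$ is infinite, then $T_2(E_\varphi)\subseteq T_2(E_k)$.
   Context: $F$ is a field of characteristic zero, $L$ an infinite-dimensional $F$-vector space with basis $e_1,e_2,\ldots$, $E$ its Grassmann algebra. For an automorphism $\varphi$ of $E$ of order dividing 2, $E_\varphi$ is the $\mathbb{Z}_2$-grading on $E$ by the eigenspaces of $\varphi$ for $1$ (degree 0) and $-1$ (degree 1). $E_k$ is the $\mathbb{Z}_2$-grading on $E$ where $e_1,\ldots,e_k$ have degree $0$ and all other $e_i$ degree $1$; $E_{k^\ast}$ is the grading where $e_1,\ldots,e_k$ have degree $1$ and all other $e_i$ degree $0$. $T_2(A)$ is the ideal of $\mathbb{Z}_2$-graded polynomial identities of a superalgebra $A$ in the free algebra $F\langle Y\cup Z\rangle$ ($Y$ even variables, $Z$ odd variables). *)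

From HB Require Import structures.
From mathcomp Require Import all_boot all_order all_algebra.
Set Implicit Arguments. Unset Strict Implicit. Unset Printing Implicit Defensive.
Import GRing.Theory.
Local Open Scope ring_scope.

(* Indices are 0-based: the paper's e_1, e_2, ... are e 0, e 1, ... *)

Definition mon (F : fieldType) (E : algType F) (e : nat -> E) (s : seq nat) : E :=
  \prod_(i <- s) e i.

Definition lincomb (F : fieldType) (E : algType F) (e : nat -> E)
  (ts : seq (F * seq nat)) : E :=
  \sum_(t <- ts) t.1 *: mon e t.2.

(** (E, e) is the Grassmann algebra of the space L with basis e_0, e_1, ...:
    the generators anticommute and the ordered monomials
    e_{i1}...e_{im} (i1 < ... < im, m >= 0) form a basis of E. *)
Definition is_grassmann_basis (F : fieldType) (E : algType F) (e : nat -> E) :=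
  [/\ forall i j, e i * e j = - (e j * e i),
      forall ts : seq (F * seq nat), all (fun t => sorted ltn t.2) ts ->
        uniq (map snd ts) -> lincomb e ts = 0 -> all (fun t => t.1 == 0) ts
    & forall x : E, exists ts : seq (F * seq nat),
        all (fun t => sorted ltn t.2) ts /\ x = lincomb e ts].

Definition in_L (F : fieldType) (E : algType F) (e : nat -> E) (x : E) :=
  exists ts : seq (F * nat), x = \sum_(t <- ts) t.1 *: e t.2.

Definition is_basis_of_L (F : fieldType) (E : algType F) (e beta : nat -> E) :=
  [/\ forall n, in_L e (beta n),
      forall ts : seq (F * nat), uniq (map snd ts) ->
        \sum_(t <- ts) t.1 *: beta t.2 = 0 -> all (fun t => t.1 == 0) ts
    & forall x, in_L e x -> exists ts : seq (F * nat),
        x = \sum_(t <- ts) t.1 *: beta t.2].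

Definition is_algebra_involution (F : fieldType) (E : algType F) (phi : E -> E) :=
  [/\ forall x y, phi (x + y) = phi x + phi y,
      forall (a : F) x, phi (a *: x) = a *: phi x,
      forall x y, phi (x * y) = phi x * phi y,
      phi 1 = 1
    & forall x, phi (phi x) = x].

Definition phi_even (F : fieldType) (E : algType F) (phi : E -> E) (x : E) :=
  phi x = x.
Definition phi_odd (F : fieldType) (E : algType F) (phi : E -> E) (x : E) :=
  phi x = - x.

(** homogeneous component of degree b of the grading of E induced by giving
    the generator e i the degree d i : the span of the ordered monomials
    whose number of odd generators has parity b. *)
Definition gen_deg_comp (F : fieldType) (E : algType F) (e : nat -> E)
  (d : nat -> bool) (b : bool) (x : E) :=
  exists ts : seq (F * seq nat),
    all (fun t => sorted ltn t.2 && (odd (count d t.2) == b)) ts /\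
    x = lincomb e ts.

(** E_k : e_1..e_k even, the others odd;  E_{k*} : e_1..e_k odd, others even *)
Definition Ek_deg (k : nat) : nat -> bool := fun i => (k <= i)%N.
Definition Ekstar_deg (k : nat) : nat -> bool := fun i => (i < k)%N.

(** Free algebra F<Y u Z>: a polynomial is a formal finite sum of
    coefficient * word; the variable (false, i) is y_i (even),
    (true, i) is z_i (odd). *)
Definition ncpoly (F : fieldType) := seq (F * seq (bool * nat)).

Definition nceval (F : fieldType) (A : algType F) (s : bool -> nat -> A)
  (f : ncpoly F) : A :=
  \sum_(t <- f) t.1 *: \prod_(v <- t.2) s v.1 v.2.

Definition graded_identity (F : fieldType) (A : algType F) (A0 A1 : A -> Prop)
  (f : ncpoly F) :=
  forall s : bool -> nat -> A,
    (forall i, A0 (s false i)) -> (forall i, A1 (s true i)) -> nceval s f = 0.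

Definition T2_sub (F : fieldType) (A B : algType F) (A0 A1 : A -> Prop)
  (B0 B1 : B -> Prop) :=
  forall f : ncpoly F, graded_identity A0 A1 f -> graded_identity B0 B1 f.

Definition infinite_nat (P : nat -> Prop) := forall m, exists n, (m <= n)%N /\ P n.
Definition has_card (P : nat -> Prop) (k : nat) :=
  exists s : seq nat, uniq s /\ size s = k /\ forall n, P n <-> n \in s.

From HB Require Import structures.
From mathcomp Require Import all_boot all_order all_algebra.
From Stdlib Require Import ClassicalEpsilon.
Set Implicit Arguments. Unset Strict Implicit. Unset Printing Implicit Defensive.
Import GRing.Theory.
Local Open Scope ring_scope.

(* Choose indices sigma 0, sigma 1, ... such that beta (sigma j) lies in the
   (-1)-eigenspace of phi exactly when e_j is odd in the target grading: the k
   indices of the finite eigenspace first, then infinitely many indices of the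
   infinite one.  Elements of L anticommute and square to zero, so by the
   universal property of the Grassmann algebra the linear map of L sending
   beta (sigma j) to e_j extends to an algebra endomorphism chi of E.
   Replacing every e_j by beta (sigma j) lifts a graded substitution into the
   target to a homogeneous substitution into E_phi, on which each graded
   identity of E_phi vanishes; applying chi recovers the original one. *)

Section LinearCombinations.
Variables (F : fieldType) (V : lmodType F) (K : Type).

Definition lcomb (w : K -> V) (ts : seq (F * K)) : V := \sum_(t <- ts) t.1 *: w t.2.

Lemma lcomb_cat w ts us : lcomb w (ts ++ us) = lcomb w ts + lcomb w us.
Proof. by rewrite /lcomb big_cat. Qed.

Lemma lcomb_opp w ts : lcomb w [seq (- t.1, t.2) | t <- ts] = - lcomb w ts.
Proof. by rewrite /lcomb big_map -sumrN; apply: eq_bigr => t _; rewrite scaleNr. Qed.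

Lemma lcomb_scale w a ts :
  lcomb w [seq (a * t.1, t.2) | t <- ts] = a *: lcomb w ts.
Proof. by rewrite /lcomb big_map scaler_sumr; apply: eq_bigr => t _; rewrite scalerA. Qed.

Lemma lcomb_seq1 w a k : lcomb w [:: (a, k)] = a *: w k.
Proof. by rewrite /lcomb big_seq1. Qed.

Lemma eq_lcomb w w' ts : w =1 w' -> lcomb w ts = lcomb w' ts.
Proof. by move=> eq_w; apply: eq_bigr => t _; rewrite eq_w. Qed.

End LinearCombinations.

Section Freeness.
Variables (F : fieldType) (V : lmodType F) (K : eqType).

Definition free_on (w : K -> V) (P : pred K) :=
  forall ts : seq (F * K), all (fun t => P t.2) ts -> uniq (map snd ts) ->
    lcomb w ts = 0 -> all (fun t => t.1 == 0) ts.

Lemma lcomb_merge (W : lmodType F) (w : K -> W) ts :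
  lcomb w ts =
  lcomb w [seq (\sum_(t <- ts | t.2 == k) t.1, k) | k <- undup (map snd ts)].
Proof.
rewrite /lcomb big_map.
under [RHS]eq_bigr => k _ do rewrite scaler_suml.
rewrite (exchange_big_dep predT) //= big_seq_cond [RHS]big_seq_cond.
apply: eq_bigr => t /andP [t_ts _]; rewrite -big_filter.
have -> : [seq k <- undup (map snd ts) | t.2 == k] = [:: t.2].
  rewrite -(filter_pred1_uniq (undup_uniq (map snd ts)) (x := t.2)).
    by apply: eq_filter => k.
  by rewrite mem_undup map_f.
by rewrite big_seq1.
Qed.

(* Collecting equal indices turns a relation among the [w k] into one with
   distinct indices, whose coefficients must all vanish. *)
Lemma free_on_lcomb_eq0 (w : K -> V) P ts :
  free_on w P -> all (fun t => P t.2) ts -> lcomb w ts = 0 ->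
  forall (W : lmodType F) (w' : K -> W), lcomb w' ts = 0.
Proof.
move=> w_free P_ts + W w'; rewrite lcomb_merge [lcomb w' _]lcomb_merge.
move/w_free; rewrite -map_comp map_id_in // undup_uniq.
have -> : all (fun t => P t.2)
    [seq (\sum_(t <- ts | t.2 == k) t.1, k) | k <- undup (map snd ts)].
  rewrite all_map; apply/allP => k; rewrite mem_undup => /mapP [t t_ts ->].
  exact: (allP P_ts t t_ts).
move=> /(_ isT isT) /allP coef0.
by rewrite /lcomb big_seq big1 // => t /coef0 /eqP ->; rewrite scale0r.
Qed.

Lemma free_on_lcomb_eq (w : K -> V) P ts us :
  free_on w P -> all (fun t => P t.2) ts -> all (fun t => P t.2) us ->
  lcomb w ts = lcomb w us ->
  forall (W : lmodType F) (w' : K -> W), lcomb w' ts = lcomb w' us.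
Proof.
move=> w_free P_ts P_us eq_w W w'.
suff : lcomb w' (ts ++ [seq (- t.1, t.2) | t <- us]) = 0.
  by rewrite lcomb_cat lcomb_opp => /eqP; rewrite subr_eq0 => /eqP.
apply: (free_on_lcomb_eq0 w_free); first by rewrite all_cat P_ts all_map.
by rewrite lcomb_cat lcomb_opp eq_w subrr.
Qed.

End Freeness.

Section SignedSort.
Variable F : fieldType.

(* The sign (0 for a repeated index) picked up when a generator is moved into
   an ordered monomial, together with the resulting ordered monomial. *)
Fixpoint signed_insert (a : nat) (s : seq nat) : F * seq nat :=
  if s is b :: s' then
    if (a < b)%N then (1, a :: s) else if a == b then (0, s)
    else (- (signed_insert a s').1, b :: (signed_insert a s').2)
  else (1, [:: a]).

Fixpoint signed_sort (u : seq nat) : F * seq nat :=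
  if u is a :: u' then
    let: (c, s) := signed_sort u' in
    (c * (signed_insert a s).1, (signed_insert a s).2)
  else (1, [::]).

Lemma mem_signed_insert a s x : x \in (signed_insert a s).2 -> x \in a :: s.
Proof.
elim: s => [|b s IHs] //=; case: ifP => // _; case: eqVneq => [_ x_s|_].
  by rewrite inE x_s orbT.
rewrite inE => /orP [/eqP ->|/IHs]; first by rewrite !inE eqxx orbT.
by rewrite !inE => /orP [] ->; rewrite ?orbT.
Qed.

Lemma sorted_signed_insert a s : sorted ltn s -> sorted ltn (signed_insert a s).2.
Proof.
elim: s => [|b s IHs] //= s_sorted; case: ifP => [a_lt_b|a_ge_b]; first by rewrite /= a_lt_b.
case: eqVneq => [//|a_neq_b].
have b_lt_a : (b < a)%N by rewrite ltn_neqAle leqNgt a_ge_b eq_sym a_neq_b.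
move: s_sorted; rewrite /= !(path_sortedE ltn_trans) => /andP [/allP b_lt_s s_sorted].
rewrite IHs // andbT; apply/allP => x /mem_signed_insert.
by rewrite inE => /orP [/eqP ->|/b_lt_s].
Qed.

Lemma sorted_signed_sort u : sorted ltn (signed_sort u).2.
Proof.
elim: u => [|a u] //=; case: (signed_sort u) => c s /=; exact: sorted_signed_insert.
Qed.

End SignedSort.

Section Monomials.
Variables (F : fieldType) (A : algType F).
Implicit Types (w : nat -> A) (ts us : seq (F * seq nat)).

Definition anticomm_family w :=
  (forall i j, w i * w j = - (w j * w i)) /\ (forall i, w i * w i = 0).

Lemma mon_cons w a s : mon w (a :: s) = w a * mon w s.
Proof. by rewrite /mon big_cons. Qed.

Lemma mon_cat w s t : mon w (s ++ t) = mon w s * mon w t.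
Proof. by rewrite /mon big_cat. Qed.

Lemma mon_signed_insert w a s : anticomm_family w ->
  w a * mon w s = (signed_insert F a s).1 *: mon w (signed_insert F a s).2.
Proof.
move=> [w_anti w_sqr0]; elim: s => [|b s IHs] /=; first by rewrite scale1r mon_cons.
case: ifP => _; first by rewrite scale1r (mon_cons w a).
case: eqVneq => [<-|_]; first by rewrite mon_cons mulrA w_sqr0 mul0r scale0r.
by rewrite !mon_cons mulrA w_anti mulNr -mulrA IHs -scalerAr scaleNr.
Qed.

Lemma mon_signed_sort w u : anticomm_family w ->
  mon w u = (signed_sort F u).1 *: mon w (signed_sort F u).2.
Proof.
move=> w_anti; elim: u => [|a u IHu] /=; first by rewrite scale1r.
rewrite mon_cons; case: (signed_sort F u) IHu => c s /= ->.
by rewrite -scalerAr mon_signed_insert // scalerA.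
Qed.

Lemma lincomb_signed_sort w ts : anticomm_family w ->
  lincomb w ts = lincomb w [seq (t.1 * (signed_sort F t.2).1, (signed_sort F t.2).2) | t <- ts].
Proof.
move=> w_anti; rewrite /lincomb big_map; apply: eq_bigr => t _.
by rewrite (mon_signed_sort _ w_anti) scalerA.
Qed.

Lemma lincomb_mul w ts us :
  lincomb w ts * lincomb w us = lincomb w [seq (t.1 * u.1, t.2 ++ u.2) | t <- ts, u <- us].
Proof.
rewrite /lincomb big_allpairs_dep mulr_suml; apply: eq_bigr => t _.
rewrite mulr_sumr; apply: eq_bigr => u _ /=.
by rewrite mon_cat -scalerAr !scalerAl scalerA [u.1 * _]mulrC.
Qed.

Lemma eq_lincomb w w' ts : w =1 w' -> lincomb w ts = lincomb w' ts.
Proof. by move=> eq_w; apply: eq_bigr => t _; congr (_ *: _); apply: eq_bigr. Qed.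

Lemma lincomb1 w : lincomb w [:: (1, [::])] = 1.
Proof. by rewrite /lincomb big_seq1 scale1r /mon big_nil. Qed.

Lemma lincomb_gen w i : lincomb w [:: (1, [:: i])] = w i.
Proof. by rewrite /lincomb big_seq1 scale1r /mon big_seq1. Qed.

Lemma mon_signed w (d : nat -> bool) s :
  mon (fun j => if d j then - w j else w j) s = if odd (count d s) then - mon w s else mon w s.
Proof.
elim: s => [|a s IHs]; first by rewrite /mon !big_nil.
rewrite /= !mon_cons IHs oddD.
by case: (d a); case: (odd _); rewrite /= ?mulNr ?mulrN ?opprK.
Qed.

Lemma lincomb_signed w (d : nat -> bool) (b : bool) ts :
  all (fun t => odd (count d t.2) == b) ts ->
  lincomb (fun j => if d j then - w j else w j) ts = if b then - lincomb w ts else lincomb w ts.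
Proof.
move=> /allP ts_b; rewrite /lincomb.
under eq_big_seq => t /ts_b /eqP t_b do rewrite mon_signed t_b.
by case: b {ts_b}; rewrite // -sumrN; under eq_bigr do rewrite scalerN.
Qed.

End Monomials.

Section AlgebraMorphisms.
Variables (F : fieldType) (A B : algType F) (f : A -> B).

Definition alg_hom :=
  [/\ {morph f : x y / x + y}, forall (a : F) x, f (a *: x) = a *: f x,
      {morph f : x y / x * y} & f 1 = 1].

Hypothesis f_hom : alg_hom.

Lemma alg_hom0 : f 0 = 0.
Proof. by case: f_hom => _ f_scale _ _; rewrite -(scale0r 0) f_scale !scale0r. Qed.

Lemma alg_hom_sum (I : Type) (r : seq I) (x : I -> A) :
  f (\sum_(i <- r) x i) = \sum_(i <- r) f (x i).
Proof. by case: f_hom => f_add _ _ _; exact: (big_morph f f_add alg_hom0). Qed.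

Lemma alg_hom_prod (I : Type) (r : seq I) (x : I -> A) :
  f (\prod_(i <- r) x i) = \prod_(i <- r) f (x i).
Proof. by case: f_hom => _ _ f_mul f_one; exact: (big_morph f f_mul f_one). Qed.

Lemma alg_hom_lcomb (K : Type) (w : K -> A) ts : f (lcomb w ts) = lcomb (f \o w) ts.
Proof.
case: f_hom => _ f_scale _ _; rewrite alg_hom_sum; apply: eq_bigr => t _.
by rewrite f_scale.
Qed.

Lemma alg_hom_lincomb (w : nat -> A) ts : f (lincomb w ts) = lincomb (f \o w) ts.
Proof.
case: f_hom => _ f_scale _ _; rewrite alg_hom_sum; apply: eq_bigr => t _.
by rewrite f_scale alg_hom_prod.
Qed.

Lemma alg_hom_nceval (s : bool -> nat -> A) (p : ncpoly F) :
  f (nceval s p) = nceval (fun b i => f (s b i)) p.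
Proof.
case: f_hom => _ f_scale _ _; rewrite alg_hom_sum; apply: eq_bigr => t _.
by rewrite f_scale alg_hom_prod.
Qed.

End AlgebraMorphisms.

Section GrassmannExtension.
Variables (F : fieldType) (E A : algType F) (e : nat -> E) (g : nat -> A).
Hypotheses (e_free : free_on (mon e) (sorted ltn))
  (e_span : forall x : E, exists ts : seq (F * seq nat),
      all (fun t => sorted ltn t.2) ts /\ x = lincomb e ts)
  (e_anti : anticomm_family e) (g_anti : anticomm_family g).

Definition grassmann_ext (x : E) : A :=
  lincomb g (epsilon (inhabits [::])
    (fun ts => all (fun t => sorted ltn t.2) ts /\ x = lincomb e ts)).

Lemma grassmann_ext_sorted ts :
  all (fun t => sorted ltn t.2) ts -> grassmann_ext (lincomb e ts) = lincomb g ts.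
Proof.
move=> ts_sorted; rewrite /grassmann_ext.
have [] := epsilon_spec (inhabits [::])
  (fun us => all (fun t => sorted ltn t.2) us /\ lincomb e ts = lincomb e us)
  (ex_intro _ ts (conj ts_sorted erefl)).
move: (epsilon _ _) => us us_sorted eq_us.
exact: (free_on_lcomb_eq e_free us_sorted ts_sorted (esym eq_us) (mon g)).
Qed.

(* Products of ordered monomials are unordered; [g] obeys the same sign rules
   as [e], so [signed_sort] reorders both sides alike. *)
Lemma grassmann_ext_lincomb ts : grassmann_ext (lincomb e ts) = lincomb g ts.
Proof.
rewrite (lincomb_signed_sort _ e_anti) (lincomb_signed_sort _ g_anti) grassmann_ext_sorted //.
by rewrite all_map; apply/allP => t _; apply: sorted_signed_sort.
Qed.

Lemma grassmann_ext_alg_hom : alg_hom grassmann_ext.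
Proof.
split.
- move=> x y; have [ts [_ ->]] := e_span x; have [us [_ ->]] := e_span y.
  by rewrite -[_ + _]lcomb_cat !grassmann_ext_lincomb -[RHS]lcomb_cat.
- move=> a x; have [ts [_ ->]] := e_span x.
  by rewrite -[_ *: _]lcomb_scale !grassmann_ext_lincomb -[RHS]lcomb_scale.
- move=> x y; have [ts [_ ->]] := e_span x; have [us [_ ->]] := e_span y.
  by rewrite lincomb_mul !grassmann_ext_lincomb lincomb_mul.
- by rewrite -(lincomb1 e) grassmann_ext_lincomb lincomb1.
Qed.

Lemma grassmann_ext_gen i : grassmann_ext (e i) = g i.
Proof. by rewrite -lincomb_gen grassmann_ext_lincomb lincomb_gen. Qed.

End GrassmannExtension.

Lemma eq_oppr_eq0 (F : fieldType) (V : lmodType F) (x : V) :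
  (2 \notin [pchar F])%N -> x = - x -> x = 0.
Proof.
move=> not_char2 /eqP; rewrite -subr_eq0 opprK -mulr2n -scaler_nat scaler_eq0.
have two_neq0 : (2%:R : F) != 0 by apply: contra not_char2 => two_eq0; rewrite inE two_eq0 andbT.
by rewrite (negbTE two_neq0) => /eqP.
Qed.

Section ReindexedGrading.
Variables (F : fieldType) (E : algType F) (e : nat -> E) (phi : E -> E) (beta : nat -> E).
Hypotheses (not_char2 : (2 \notin [pchar F])%N) (HE : is_grassmann_basis e)
  (Hphi : is_algebra_involution phi) (Hbeta : is_basis_of_L e beta).

Lemma in_L_lcomb (w : nat -> E) ts : (forall n, in_L e (w n)) -> in_L e (lcomb w ts).
Proof.
move=> w_L; elim: ts => [|[a n] ts [us us_def]]; first by exists [::]; rewrite /lcomb !big_nil.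
have [vs vs_def] := w_L n; exists ([seq (a * t.1, t.2) | t <- vs] ++ us).
rewrite -[RHS]/(lcomb e _) lcomb_cat lcomb_scale.
by rewrite /lcomb big_cons -/(lcomb w ts) us_def vs_def.
Qed.

Lemma in_L_gen i : in_L e (e i).
Proof. by exists [:: (1, i)]; rewrite big_seq1 scale1r. Qed.

Lemma in_L_anticomm x y : in_L e x -> in_L e y -> x * y = - (y * x).
Proof.
case: HE => e_anti _ _ [ts ->] [us ->].
rewrite mulr_suml [in RHS]mulr_suml -sumrN.
under eq_bigr do rewrite mulr_sumr.
under [in RHS]eq_bigr do rewrite mulr_sumr -sumrN.
rewrite [RHS]exchange_big; apply: eq_bigr => t _; apply: eq_bigr => u _.
by rewrite -!scalerAl -!scalerAr e_anti !scalerN !scalerA mulrC.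
Qed.

Lemma in_L_sqr0 x : in_L e x -> x * x = 0.
Proof. by move=> x_L; apply: (eq_oppr_eq0 not_char2); apply: in_L_anticomm. Qed.

Lemma gen_anticomm : anticomm_family e.
Proof. by case: HE => e_anti _ _; split=> // i; apply/in_L_sqr0/in_L_gen. Qed.

Lemma beta_free : free_on beta predT.
Proof. by case: Hbeta => _ beta_free _ ts _; apply: beta_free. Qed.

Lemma phi_beta_eigen_disjoint n : phi (beta n) = beta n -> phi (beta n) = - beta n -> False.
Proof.
move=> beta_even beta_odd.
have beta0 : beta n = 0 by apply: (eq_oppr_eq0 not_char2); rewrite -{1}beta_even.
have := @beta_free [:: (1, n)] isT isT.
by rewrite lcomb_seq1 beta0 scaler0 /= oner_eq0 => /(_ erefl).
Qed.

Variables (sigma : nat -> nat) (d : nat -> bool).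
Hypotheses (sigma_inj : injective sigma)
  (phi_beta_sigma : forall j,
     phi (beta (sigma j)) = if d j then - beta (sigma j) else beta (sigma j)).

(* Off the range of [sigma], [e_sigma_inv n] is an unspecified element of [L]. *)
Definition e_sigma_inv (n : nat) : E :=
  epsilon (inhabits 0) (fun v => in_L e v /\ forall j, sigma j = n -> v = e j).

Lemma e_sigma_inv_spec n :
  in_L e (e_sigma_inv n) /\ forall j, sigma j = n -> e_sigma_inv n = e j.
Proof.
apply: (epsilon_spec _ (fun v => in_L e v /\ forall j, sigma j = n -> v = e j)).
have [[j <-]|no_j] := classic (exists j, sigma j = n).
  by exists (e j); split=> [|j' /sigma_inj ->]; [apply: in_L_gen|].
by exists 0; split=> [|j sigma_j]; [exists [::]; rewrite big_nil | case: no_j; exists j].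
Qed.

(* Read off the [beta]-coordinates of [x]; meaningless outside [L]. *)
Definition lam (x : E) : E :=
  lcomb e_sigma_inv (epsilon (inhabits [::]) (fun ts => x = lcomb beta ts)).

Lemma lam_lcomb_beta ts : lam (lcomb beta ts) = lcomb e_sigma_inv ts.
Proof.
rewrite /lam; have := epsilon_spec (inhabits [::]) (fun us => lcomb beta ts = lcomb beta us)
  (ex_intro _ ts erefl).
move: (epsilon _ _) => us eq_us.
by apply: (free_on_lcomb_eq beta_free) => //; apply/allP.
Qed.

Lemma in_L_beta_coords x : in_L e x -> exists ts, x = lcomb beta ts.
Proof. by case: Hbeta => _ _ beta_span /beta_span. Qed.

Lemma lam_add x y : in_L e x -> in_L e y -> lam (x + y) = lam x + lam y.
Proof.
move=> /in_L_beta_coords [ts ->] /in_L_beta_coords [us ->].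
by rewrite -lcomb_cat !lam_lcomb_beta lcomb_cat.
Qed.

Lemma lam_scale a x : in_L e x -> lam (a *: x) = a *: lam x.
Proof.
move=> /in_L_beta_coords [ts ->].
by rewrite -lcomb_scale !lam_lcomb_beta lcomb_scale.
Qed.

Lemma lam_lcomb_gen ts : lam (lcomb e ts) = lcomb (lam \o e) ts.
Proof.
elim: ts => [|t ts IHts].
  by move: (lam_lcomb_beta [::]); rewrite /lcomb !big_nil.
rewrite /lcomb !big_cons -!/(lcomb _ ts) -IHts lam_add ?lam_scale //.
- exact: in_L_gen.
- by rewrite -lcomb_seq1; apply: in_L_lcomb in_L_gen.
- exact: in_L_lcomb in_L_gen.
Qed.

Lemma in_L_lam x : in_L e (lam x).
Proof. by apply: in_L_lcomb => n; case: (e_sigma_inv_spec n). Qed.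

Definition chi : E -> E := grassmann_ext e (lam \o e).

Lemma lam_gen_anticomm : anticomm_family (lam \o e).
Proof. by split=> [i j|i]; [apply: in_L_anticomm | apply: in_L_sqr0]; apply: in_L_lam. Qed.

Lemma chi_alg_hom : alg_hom chi.
Proof.
case: HE => _ e_free e_span.
exact: grassmann_ext_alg_hom e_free e_span gen_anticomm lam_gen_anticomm.
Qed.

Lemma chi_gen i : chi (e i) = lam (e i).
Proof.
by case: HE => _ e_free _; exact: grassmann_ext_gen e_free gen_anticomm lam_gen_anticomm i.
Qed.

Lemma chi_beta_sigma j : chi (beta (sigma j)) = e j.
Proof.
have [beta_L _ _] := Hbeta; have [ts beta_def] := beta_L (sigma j).
rewrite [in LHS]beta_def -/(lcomb e ts) (alg_hom_lcomb chi_alg_hom) (eq_lcomb _ chi_gen).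
rewrite -lam_lcomb_gen /lcomb -beta_def.
rewrite -[beta _]scale1r -lcomb_seq1 lam_lcomb_beta lcomb_seq1 scale1r.
exact: (e_sigma_inv_spec (sigma j)).2 j erefl.
Qed.

Lemma phi_alg_hom : alg_hom phi.
Proof. by case: Hphi => phi_add phi_scale phi_mul phi_one _; split. Qed.

Lemma gen_deg_comp_lift b x :
  gen_deg_comp e d b x -> exists y, phi y = (if b then - y else y) /\ chi y = x.
Proof.
case=> ts [ts_deg ->]; exists (lincomb (beta \o sigma) ts).
have ts_b : all (fun t => odd (count d t.2) == b) ts.
  by apply/allP => t /(allP ts_deg) /andP [].
rewrite (alg_hom_lincomb phi_alg_hom) (eq_lincomb _ phi_beta_sigma) (lincomb_signed _ ts_b).
by rewrite (alg_hom_lincomb chi_alg_hom) (eq_lincomb _ chi_beta_sigma).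
Qed.

Theorem T2_sub_gen_deg :
  T2_sub (phi_even phi) (phi_odd phi) (gen_deg_comp e d false) (gen_deg_comp e d true).
Proof.
move=> p p_id s s_even s_odd.
have s_deg b i : gen_deg_comp e d b (s b i) by case: b; [exact: s_odd | exact: s_even].
have [lift lift_spec] := choice
  (fun (bi : bool * nat) y => phi y = (if bi.1 then - y else y) /\ chi y = s bi.1 bi.2)
  (fun bi => gen_deg_comp_lift (s_deg bi.1 bi.2)).
rewrite -(alg_hom0 chi_alg_hom) -(p_id (fun b i => lift (b, i))) => [|i|i].
- rewrite (alg_hom_nceval chi_alg_hom); apply: eq_bigr => t _; congr (_ *: _).
  by apply: eq_bigr => -[b i] _; rewrite (lift_spec (b, i)).2.
- exact: (lift_spec (false, i)).1.
- exact: (lift_spec (true, i)).1.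
Qed.

End ReindexedGrading.

Lemma infinite_nat_enum (B : nat -> Prop) :
  infinite_nat B -> exists p : nat -> nat, injective p /\ forall k, B (p k).
Proof.
move=> B_inf; have [next next_spec] := choice (fun m n => (m <= n)%N /\ B n) B_inf.
pose p := fix p k := if k is k'.+1 then next (p k').+1 else next 0%N.
have p_incr : {homo p : i j / (i < j)%N}.
  by apply: homo_ltn => [? ? ?|i]; [exact: ltn_trans | exact: (next_spec _).1].
exists p; split=> [i j eq_p|[|k]]; try exact: (next_spec _).2.
by case: (ltngtP i j) => // /p_incr; rewrite eq_p ltnn.
Qed.

Lemma exists_reindexing (A B : nat -> Prop) k :
  has_card A k -> infinite_nat B -> (forall n, A n -> B n -> False) ->
  exists sigma : nat -> nat, [/\ injective sigma,
    forall j, (j < k)%N -> A (sigma j) & forall j, (k <= j)%N -> B (sigma j)].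
Proof.
move=> [s [s_uniq [<- A_s]]] /infinite_nat_enum [p [p_inj p_B]] AB_disj.
have A_nth j : (j < size s)%N -> A (nth 0%N s j) by move=> j_lt; apply/A_s/mem_nth.
exists (fun j => if (j < size s)%N then nth 0%N s j else p (j - size s)%N); split.
- move=> i j /=; case: ltnP => i_s; case: ltnP => j_s.
  + by move/eqP; rewrite nth_uniq // => /eqP.
  + by move=> eq_ij; case: (AB_disj _ (A_nth i i_s)); rewrite eq_ij.
  + by move=> eq_ij; case: (AB_disj _ (A_nth j j_s)); rewrite -eq_ij.
  + by move/p_inj/(congr1 (addn^~ (size s))); rewrite !subnK.
- by move=> j j_lt; rewrite j_lt; apply: A_nth.
- by move=> j j_ge; rewrite ltnNge j_ge; apply: p_B.
Qed.

Theorem mainTheorem5 (F : fieldType) (E : algType F) (e : nat -> E)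
  (phi : E -> E) (beta : nat -> E)
  (charF : [pchar F] =i pred0)
  (HE : is_grassmann_basis e)
  (Hphi : is_algebra_involution phi)
  (Hbeta : is_basis_of_L e beta) :
  (forall k : nat,
     infinite_nat (fun n => phi (beta n) = beta n) ->
     has_card (fun n => phi (beta n) = - beta n) k ->
     infinite_nat (fun n => ~ (phi (beta n) = beta n \/ phi (beta n) = - beta n)) ->
     T2_sub (phi_even phi) (phi_odd phi)
            (gen_deg_comp e (Ekstar_deg k) false) (gen_deg_comp e (Ekstar_deg k) true))
  /\
  (forall k : nat,
     has_card (fun n => phi (beta n) = beta n) k ->
     infinite_nat (fun n => phi (beta n) = - beta n) ->
     infinite_nat (fun n => ~ (phi (beta n) = beta n \/ phi (beta n) = - beta n)) ->
     T2_sub (phi_even phi) (phi_odd phi)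
            (gen_deg_comp e (Ek_deg k) false) (gen_deg_comp e (Ek_deg k) true)).
Proof.
have not_char2 : (2 \notin [pchar F])%N by rewrite charF.
have disjoint := phi_beta_eigen_disjoint (phi := phi) not_char2 Hbeta.
split=> k.
- move=> even_inf odd_card _.
  have [sigma [sigma_inj sigma_odd sigma_even]] :=
    exists_reindexing odd_card even_inf (fun n odd_n even_n => disjoint n even_n odd_n).
  apply: (T2_sub_gen_deg not_char2 HE Hphi Hbeta sigma_inj) => j.
  by rewrite /Ekstar_deg; case: ltnP => [/sigma_odd|/sigma_even].
- move=> even_card odd_inf _.
  have [sigma [sigma_inj sigma_even sigma_odd]] :=
    exists_reindexing even_card odd_inf disjoint.
  apply: (T2_sub_gen_deg not_char2 HE Hphi Hbeta sigma_inj) => j.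
  by rewrite /Ek_deg; case: leqP => [/sigma_odd|/sigma_even].
Qed.
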